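(* Let $r\ge3$ and $n\ge1$ be integers and put $q_k=\frac{1+r^k(r-2)}{r-1}$ for $k\in\mathbb Z_{\ge0}$. If $B\subseteq\mathbb Z_{q_n}^n$ is an independent set in $C_{q_{n-1},q_n}^{\boxtimes n}$ with $|B|=q_n$, then for every coordinate $i\in\{1,\dots,n\}$ and every symbol $s\in\mathbb Z_{q_n}$ there is exactly one $b\in B$ with $b_i=s$.
   Context: For positive integers $q,d$ with $q\ge 2d$, the circular graph $C_{d,q}$ has vertex set $\mathbb Z_q$, two distinct vertices $x,y$ being adjacent iff $\min\{|x-y|,q-|x-y|\}<d$ (viewing $x,y$ as integers in $\{0,\dots,q-1\}$). For a graph $G=(V,E)$, $G^{\boxtimes n}$ has vertex set $V^n$, distinct $(u_i)$, $(v_i)$ adjacent iff for every $i$ either $u_i=v_i$ or $u_iv_i\in E$. An independent set is a set of pairwise non-adjacent vertices. *)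

From mathcomp Require Import all_boot.
Set Implicit Arguments. Unset Strict Implicit. Unset Printing Implicit Defensive.

(* q_k = (1 + r^k (r-2)) / (r-1); the division is exact since r^k = 1 mod r-1. *)
Definition qseq (r k : nat) : nat := (1 + r ^ k * (r - 2)) %/ (r - 1).

Definition cdist (q : nat) (x y : 'I_q) : nat :=
  let a := maxn x y - minn x y in minn a (q - a).

Definition circ_adj (d q : nat) (x y : 'I_q) : bool :=
  (x != y) && (cdist x y < d).

Definition strong_adj (V : finType) (adj : rel V) (n : nat)
    (u v : {ffun 'I_n -> V}) : bool :=
  (u != v) && [forall i, (u i == v i) || adj (u i) (v i)].

Definition independent (T : finType) (adj : rel T) (B : {set T}) : Prop :=
  forall u v, u \in B -> v \in B -> ~~ adj u v.

From mathcomp Require Import all_boot zify.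
Set Implicit Arguments. Unset Strict Implicit.

(* Proof of Proposition 9.5.  Write q = q_n and d = q_{n-1}, so that
   q = r d - 1.  An independent set of C_{d,q}^{boxtimes n} is a code in which
   any two distinct words are at circular distance >= d in some coordinate.
   1. Code bound: if the separating coordinates range over a set J, double
      counting over the q arcs of d consecutive symbols in one coordinate
      i \in J gives d |B| <= q A, where A bounds the codes separated on J \ i
      (the words whose i-th symbol lies in a fixed arc); hence
      |B| <= A_{|J|} with A_0 = 1, A_{k+1} = floor (q A_k / d), and
      A_k = q_k for k <= n-1.
   2. Fix a coordinate i and let f u be the number of words of B with i-th
      symbol u mod q.  Each window sum f t + ... + f (t+d-1) counts the words
      over an arc, so it is at most q_{n-1} = d by step 1; the q windows add
      up to d |B| = d q, hence all of them equal d.  Equal consecutive windows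
      force f to be d-periodic; being also q-periodic with q + 1 = r d, f is
      constant, and summing over Z_q shows that constant is 1. *)

Fixpoint qrec (r k : nat) : nat := if k is k'.+1 then r * qrec r k' - 1 else 1.

(* q_k >= 1, which keeps the truncated subtraction r q_k - 1 honest. *)
Lemma qrec_ge1 r k : 2 <= r -> 1 <= qrec r k.
Proof. by move=> hr; elim: k => [|k IH] //=; nia. Qed.

Lemma qrec_closed_form r k : 2 <= r -> (r - 1) * qrec r k = 1 + r ^ k * (r - 2).
Proof.
move=> hr; elim: k => [|k IH] /=; first by rewrite expn0; lia.
have := qrec_ge1 k hr; rewrite expnS; move: IH.
set P := r ^ k; set x := qrec r k; nia.
Qed.

Lemma qseq_qrec r k : 2 <= r -> qseq r k = qrec r k.
Proof. by move=> hr; rewrite /qseq -qrec_closed_form // mulKn //; lia. Qed.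

Lemma qrec_mono r k m : 2 <= r -> k <= m -> qrec r k <= qrec r m.
Proof.
move=> hr; elim: m => [|m IH]; first by rewrite leqn0 => /eqP ->.
rewrite leq_eqVlt => /orP [/eqP -> //| hk].
by apply: leq_trans (IH hk) _ => /=; have := qrec_ge1 m hr; nia.
Qed.

Definition periodic (p : nat) (f : nat -> nat) : Prop := forall t, f (t + p) = f t.

Definition window (d : nat) (f : nat -> nat) (t : nat) : nat := \sum_(j < d) f (t + j).

Lemma periodic_sum_shift q f j : periodic q f ->
  \sum_(t < q) f (t + j) = \sum_(t < q) f t.
Proof.
move=> fq; elim: j => [|j IH]; first by under eq_bigr do rewrite addn0.
rewrite -IH; case: q fq {IH} => [|q] fq; first by rewrite !big_ord0.
rewrite big_ord_recr big_ord_recl /= addnC; congr (_ + _).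
  by rewrite -(fq j); congr f; lia.
by apply: eq_bigr => t _; rewrite /bump /=; congr f; lia.
Qed.

(* Every value of f is seen by exactly d windows of a period. *)
Lemma window_total q d f : periodic q f ->
  \sum_(t < q) window d f t = d * \sum_(t < q) f t.
Proof.
move=> fq; rewrite /window exchange_big /=.
by under eq_bigr do rewrite periodic_sum_shift //; rewrite sum_nat_const card_ord.
Qed.

Lemma window_periodic q d f : periodic q f -> periodic q (window d f).
Proof. by move=> fq t; apply: eq_bigr => j _; rewrite addnAC fq. Qed.

Lemma sum_bounded_eq q (F : 'I_q -> nat) c :
  (forall t, F t <= c) -> \sum_(t < q) F t = q * c -> forall t, F t = c.
Proof.
move=> Fle Fsum t; apply/eqP; rewrite eqn_leq Fle leqNgt; apply/negP => Flt.
have : \sum_(s < q) F s < \sum_(s < q) c.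
  by rewrite (bigD1 t) // [X in _ < X](bigD1 t) //= -addSn leq_add // leq_sum.
by rewrite Fsum sum_nat_const card_ord ltnn.
Qed.

Lemma window_const q d f c : 0 < q -> periodic q f ->
  (forall t, window d f t <= c) -> d * \sum_(t < q) f t = q * c ->
  forall t, window d f t = c.
Proof.
move=> q0 fq Wle total t.
have Wsum : \sum_(s < q) window d f (s + t) = q * c.
  by rewrite (periodic_sum_shift _ (window_periodic d fq)) window_total.
by have := sum_bounded_eq (fun s : 'I_q => Wle (s + t)) Wsum (Ordinal q0).
Qed.

(* Consecutive windows of length d differ by f (t + d) - f t. *)
Lemma window_const_periodic d f c : (forall t, window d f t = c) -> periodic d f.
Proof.
move=> Wc t; case: d Wc => [|d] Wc; first by rewrite addn0.
have := Wc t.+1; rewrite -(Wc t) /window big_ord_recr big_ord_recl /=.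
have -> : \sum_(j < d) f (t + bump 0 j) = \sum_(j < d) f (t.+1 + j).
  by apply: eq_bigr => j _; congr f; rewrite /bump; lia.
by rewrite [RHS]addnC addn0 addSnnS => /addnI.
Qed.

Lemma two_periods_const q d r f : periodic q f -> periodic d f -> q.+1 = r * d ->
  forall t, f t = f 0.
Proof.
move=> fq fd qd.
have fkd k t : f (t + k * d) = f t.
  by elim: k => [|k IH]; rewrite ?addn0 // mulSnr addnA fd IH.
elim=> [//|t IH]; rewrite -IH -(fq t.+1) -(fkd r t); congr f; lia.
Qed.

Definition in_arc (q d t x : nat) : bool := [exists j : 'I_d, x == (t + j) %% q].

Lemma modn_addE q t j : t < q -> j < q ->
  (t + j) %% q = if t + j < q then t + j else t + j - q.
Proof.
move=> ht hj; case: ifP => h; first by rewrite modn_small.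
have -> : t + j = (t + j - q) + q by lia.
by rewrite modnDr modn_small; lia.
Qed.

Lemma arc_cdist q d t (u v : 'I_q) : d <= q -> in_arc q d t u -> in_arc q d t v ->
  cdist u v < d.
Proof.
move=> hdq /existsP [j1 /eqP hu] /existsP [j2 /eqP hv].
have q0 : 0 < q := leq_ltn_trans (leq0n u) (ltn_ord u).
rewrite -modnDml in hu; rewrite -modnDml in hv.
have ht : t %% q < q by rewrite ltn_mod.
have hj1 := ltn_ord j1; have hj2 := ltn_ord j2.
rewrite (modn_addE ht (leq_trans hj1 hdq)) in hu.
rewrite (modn_addE ht (leq_trans hj2 hdq)) in hv.
have hx := ltn_ord u; have hy := ltn_ord v.
move: hu hv; rewrite /cdist; set T := t %% q.
by case: ifP; case: ifP => h2 h1 -> ->; lia.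
Qed.

(* Since d <= q the d residues of an arc are distinct, so membership in the
   arc is the sum of the indicators of its points. *)
Lemma in_arc_sum q d t x : d <= q ->
  (in_arc q d t x : nat) = \sum_(j < d) (x == (t + j) %% q : nat).
Proof.
move=> hdq; case: (boolP (in_arc q d t x)) => [/existsP [j0 /eqP hj0]|]; last first.
  by move=> /existsPn hn; rewrite big1 // => j _; rewrite (negbTE (hn j)).
rewrite (bigD1 j0) //= hj0 eqxx big1 // => j hj.
case: eqP => // /eqP; rewrite eqn_modDl !modn_small ?(leq_trans (ltn_ord _) hdq) //.
by move=> /eqP /val_inj hjj; rewrite hjj eqxx in hj.
Qed.

Lemma card_sum_indicator (T : finType) (B : {set T}) (P : pred T) :
  #|[set b in B | P b]| = \sum_(b in B) (P b : nat).
Proof.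
rewrite -sum1dep_card big_mkcondr /=.
by apply: eq_bigr => b _; case: (P b).
Qed.

Section Fibers.
Variables (q n : nat) (B : {set {ffun 'I_n -> 'I_q}}) (i : 'I_n).

Definition fiber (u : nat) : nat := #|[set b in B | val (b i) == u %% q]|.

Lemma fiber_periodic : periodic q fiber.
Proof. by move=> u; apply: eq_card => b; rewrite !inE modnDr. Qed.

Lemma fiber_sum : \sum_(u < q) fiber u = #|B|.
Proof.
rewrite -sum1_card (partition_big (P := mem B) (fun b => b i) predT) //=.
by apply: eq_bigr => u _; rewrite sum1dep_card /fiber modn_small.
Qed.

Lemma arc_window d t : d <= q ->
  #|[set b in B | in_arc q d t (b i)]| = window d fiber t.
Proof.
move=> hdq; rewrite card_sum_indicator.
under eq_bigr => b _ do rewrite in_arc_sum //.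
by rewrite exchange_big; apply: eq_bigr => j _; rewrite /fiber card_sum_indicator.
Qed.

End Fibers.

Definition separated q d n (J : {set 'I_n}) (B : {set {ffun 'I_n -> 'I_q}}) : Prop :=
  forall u v, u \in B -> v \in B -> u != v ->
    exists2 j, j \in J & d <= cdist (u j) (v j).

Lemma independent_separated q d n (B : {set {ffun 'I_n -> 'I_q}}) :
  independent (strong_adj (@circ_adj d q) (n:=n)) B -> separated d [set: 'I_n] B.
Proof.
move=> hind u v uB vB uv; have := hind u v uB vB.
rewrite /strong_adj uv /= => /forallPn [j]; rewrite negb_or /circ_adj.
by move=> /andP [hne]; rewrite hne /= -leqNgt => hj; exists j; rewrite ?inE.
Qed.

(* Words on a common arc in coordinate i are close there, so coordinate i is
   no longer needed to separate them. *)
Lemma separated_arc q d n (J : {set 'I_n}) (B : {set {ffun 'I_n -> 'I_q}}) i t :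
  d <= q -> separated d J B -> i \in J ->
  separated d (J :\ i) [set b in B | in_arc q d t (b i)].
Proof.
move=> hdq hB hi u v; rewrite !inE => /andP [uB ua] /andP [vB va] uv.
have [j jJ hj] := hB u v uB vB uv; exists j => //; rewrite !inE jJ andbT.
by apply: contraTneq hj => ->; rewrite -ltnNge (arc_cdist hdq ua va).
Qed.

Fixpoint abound (q d k : nat) : nat := if k is k'.+1 then q * abound q d k' %/ d else 1.

Lemma separated_bound q d n (J : {set 'I_n}) (B : {set {ffun 'I_n -> 'I_q}}) :
  0 < d -> d <= q -> separated d J B -> #|B| <= abound q d #|J|.
Proof.
move=> d0 hdq; move Ek : #|J| => k; elim: k J B Ek => [|k IH] J B Ek hB /=.
  rewrite leqNgt; apply/negP => /card_gt1P [u [v [uB vB uv]]].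
  have [j jJ _] := hB u v uB vB uv.
  by move/eqP: Ek; rewrite cards_eq0 => /eqP J0; rewrite J0 inE in jJ.
have [i hi] : exists i, i \in J by apply/card_gt0P; rewrite Ek.
have EkJ : #|J :\ i| = k by move: Ek; rewrite (cardsD1 i J) hi; lia.
rewrite leq_divRL // mulnC -(fiber_sum B i) -(window_total _ (fiber_periodic B i)).
rewrite -[q in q * _]card_ord -sum_nat_const; apply: leq_sum => t _.
by rewrite -arc_window // (IH (J :\ i)) //; apply: separated_arc.
Qed.

(* With q + 1 = r d, A_{k+1} = r A_k - 1 as long as 1 <= A_k <= d; hence the
   bound A_k agrees with q_k below level m when d = q_m and q = q_{m+1}. *)
Lemma abound_qrec r m k : 2 <= r -> k <= m ->
  abound (qrec r m.+1) (qrec r m) k = qrec r k.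
Proof.
move=> hr; elim: k => [//|k IH] hk /=; rewrite IH; last lia.
have := qrec_ge1 k hr; have := qrec_mono hr (ltnW hk).
set x := qrec r k; set d := qrec r m => hxd hx1.
apply/eqP; rewrite eqn_leq -ltnS ltn_divLR ?leq_divRL; [apply/andP; split; nia|lia|lia].
Qed.

Theorem proposition9p5 (r n : nat) (hr : 3 <= r) (hn : 1 <= n)
    (B : {set {ffun 'I_n -> 'I_(qseq r n)}}) :
  independent (strong_adj (@circ_adj (qseq r n.-1) (qseq r n)) (n:=n)) B ->
  #|B| = qseq r n ->
  forall (i : 'I_n) (s : 'I_(qseq r n)), #|[set b in B | b i == s]| = 1.
Proof.
case: n hn B => [//|m] _ B /= hind hcard i s; have r2 : 2 <= r by lia.
set q := qseq r m.+1 in B hind hcard s *; set d := qseq r m in hind.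
have qE : q = qrec r m.+1 by rewrite /q qseq_qrec.
have dE : d = qrec r m by rewrite /d qseq_qrec.
have d1 : 0 < d by rewrite dE qrec_ge1.
have qd : q.+1 = r * d by rewrite qE dE /=; nia.
have hdq : d <= q by nia.
(* every arc in coordinate i carries at most A_m = q_m = d words *)
have Wle t : window d (fiber B i) t <= d.
  have sep := separated_arc (t := t) hdq (independent_separated hind) (in_setT i).
  rewrite -arc_window //; apply: leq_trans (separated_bound d1 hdq sep) _.
  have -> : #|[set: 'I_m.+1] :\ i| = m by rewrite setTD cardsC1 card_ord.
  by rewrite qE dE abound_qrec.
have q0 : 0 < q := leq_trans d1 hdq.
(* the q windows add up to d |B| = d q, so each of them equals d *)
have Wd : forall t, window d (fiber B i) t = d.
  by apply: (window_const q0 (fiber_periodic B i) Wle); rewrite fiber_sum hcard mulnC.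
have fc := two_periods_const (fiber_periodic B i) (window_const_periodic Wd) qd.
have f1 : fiber B i 0 = 1.
  have := fiber_sum B i; under eq_bigr do rewrite fc; rewrite sum_nat_const card_ord.
  by rewrite hcard => h; apply/eqP; rewrite -(eqn_pmul2l q0) h muln1.
by rewrite -f1 -(fc s) /fiber modn_small //; apply: eq_card => b; rewrite !inE.
Qed.
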